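(* Let $G$ be a strategic game and $\phi=(\phi_1,\dots,\phi_n)$ with each $\phi_i$ a positive optimality condition for player $i$. Then the optimality operator $O_\phi$ is monotonic on the lattice of restrictions of $G$ ordered componentwise by inclusion.
   Context: Strategic game $G=(T_1,\dots,T_n,<_1,\dots,<_n)$ with arbitrary nonempty $T_i$, $<_i$ total linear order on $T=\prod_iT_i$, $\ge_i$ reflexive closure. Restrictions $S=(S_1,\dots,S_n)$, $S_i\subseteq T_i$, ordered by $S\subseteq S'$ iff $S_i\subseteq S'_i$ for all $i$. $\mathcal{L}_O$: first-order formulas from atoms $C(a)$, $a\ge^i_cb$ ($a,b,c$ variables or constant $o$) with $\neg,\wedge,\exists$. In an optimality model $(G,G',s)$ ($G'$ a restriction, $s\in T$) with assignment $\alpha$ ($o\mapsto s$): $C(x)$ iff $\alpha(x)_j\in G'_j$ for all $j$; $x\ge^i_zy$ iff $(\alpha(x)_i,\alpha(z)_{-i})\ge_i(\alpha(y)_i,\alpha(z)_{-i})$. An optimality condition for $i$ is a closed formula using only $\ge^i$; it is positive if every occurrence of $C(\cdot)$ lies under an even number of negation signs. $\phi_i(s_i,S)$ means $(G,S,s)\models\phi_i$ for a profile $s$ with $i$-th component $s_i$. Optimality operator: $O_\phi(S)=\prod_{i=1}^n\{s_i\in S_i:\phi_i(s_i,S)\}$. *)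

From mathcomp Require Import all_boot.
Set Implicit Arguments.
Unset Strict Implicit.
Unset Printing Implicit Defensive.

Section Game.
Variable n : nat.

Record game := Game {
  strat : 'I_n -> Type;
  pref_lt : 'I_n -> (forall j, strat j) -> (forall j, strat j) -> Prop;
  pref_irrefl : forall i s, ~ pref_lt i s s;
  pref_trans : forall i s t u, pref_lt i s t -> pref_lt i t u -> pref_lt i s u;
  pref_total : forall i s t, pref_lt i s t \/ s = t \/ pref_lt i t s
}.

Definition profile (G : game) := forall j, strat G j.

Definition pref_ge (G : game) (i : 'I_n) (s t : profile G) : Prop :=
  @pref_lt G i t s \/ s = t.

Definition restriction (G : game) := forall i : 'I_n, strat G i -> Prop.

Definition subres (G : game) (S S' : restriction G) : Prop :=
  forall i x, S i x -> S' i x.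

Inductive term := tVar of nat | tO.

Inductive form :=
  | fC of term
  | fGe of 'I_n & term & term & term   (* fGe i a c b  is  a >=^i_c b *)
  | fNot of form
  | fAnd of form & form
  | fEx of nat & form.

Fixpoint free_in (k : nat) (f : form) : Prop :=
  let ft t := t = tVar k in
  match f with
  | fC a => ft a
  | fGe _ a c b => ft a \/ ft c \/ ft b
  | fNot g => free_in k g
  | fAnd g h => free_in k g \/ free_in k h
  | fEx m g => m <> k /\ free_in k g
  end.

Definition closed (f : form) : Prop := forall k, ~ free_in k f.

Fixpoint only_player (i : 'I_n) (f : form) : Prop :=
  match f with
  | fC _ => True
  | fGe j _ _ _ => j = i
  | fNot g => only_player i g
  | fAnd g h => only_player i g /\ only_player i h
  | fEx _ g => only_player i g
  end.

Definition optimality_condition (i : 'I_n) (f : form) : Prop :=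
  closed f /\ only_player i f.

Fixpoint C_parity_ok (even : bool) (f : form) : Prop :=
  match f with
  | fC _ => even = true
  | fGe _ _ _ _ => True
  | fNot g => C_parity_ok (~~ even) g
  | fAnd g h => C_parity_ok even g /\ C_parity_ok even h
  | fEx _ g => C_parity_ok even g
  end.

Definition positive (f : form) : Prop := C_parity_ok true f.

Definition eval_term (G : game) (s : profile G) (alpha : nat -> profile G)
  (t : term) : profile G :=
  match t with tVar k => alpha k | tO => s end.

Definition upd (G : game) (alpha : nat -> profile G) (k : nat) (p : profile G) :
  nat -> profile G := fun m => if m == k then p else alpha m.

Fixpoint sat (G : game) (G' : restriction G) (s : profile G)
  (alpha : nat -> profile G) (f : form) : Prop :=
  match f with
  | fC a => forall j, G' j (eval_term s alpha a j)
  | fGe i a c b =>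
      let z := eval_term s alpha c in
      pref_ge i (dfwith z (eval_term s alpha a i))
                (dfwith z (eval_term s alpha b i))
  | fNot g => ~ sat G' s alpha g
  | fAnd g h => sat G' s alpha g /\ sat G' s alpha h
  | fEx k g => exists p, sat G' s (upd alpha k p) g
  end.

(* (G, G', s) |= f for closed f: the assignment of variables is irrelevant;
   we take the one sending every variable to s (o is interpreted as s). *)
Definition models (G : game) (G' : restriction G) (s : profile G) (f : form) :=
  sat G' s (fun _ => s) f.

Definition phi_holds (G : game) (i : 'I_n) (f : form) (si : strat G i)
  (S : restriction G) : Prop :=
  forall s : profile G, s i = si -> models S s f.

Definition opt_op (G : game) (phi : 'I_n -> form) (S : restriction G) :
  restriction G := fun i si => S i si /\ @phi_holds G i (phi i) si S.

End Game.

(* Satisfaction of a formula in which C occurs only positively is preserved when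
   the restriction interpreting C grows: induction on the formula, where a
   negation swaps the direction of the implication and flips the parity.  The
   optimality operator inherits this monotonicity componentwise. *)

From mathcomp Require Import all_boot.

Section Monotonicity.
Variables (n : nat) (G : game n).

Definition sat_transfer (even : bool) (S S' : restriction G) s alpha
  (f : form n) : Prop :=
  if even then sat S s alpha f -> sat S' s alpha f
  else sat S' s alpha f -> sat S s alpha f.

Lemma sat_transfer_parity (S S' : restriction G) :
  subres S S' -> forall (f : form n) even s alpha,
  C_parity_ok even f -> sat_transfer even S S' s alpha f.
Proof.
rewrite /sat_transfer => sub_SS'.
elim=> [a | i a c b | g IHg | g IHg h IHh | k g IHg] even s alpha /=.
- by move=> -> CS j; apply: sub_SS'.
- by case: even.
- move=> /(IHg _ s alpha).
  by case: even => /= transfer_g not_g sat_g; apply/not_g/transfer_g.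
- move=> [/(IHg _ s alpha) transfer_g /(IHh _ s alpha) transfer_h].
  by case: even transfer_g transfer_h => /= tg th [/tg sat_g /th sat_h].
- move=> par_g; case: even par_g => par_g [p sat_g]; exists p;
  exact: (IHg _ s (upd alpha k p) par_g).
Qed.

Lemma sat_positive_mono (S S' : restriction G) (f : form n) s alpha :
  subres S S' -> positive f -> sat S s alpha f -> sat S' s alpha f.
Proof. by move=> sub_SS'; apply: sat_transfer_parity. Qed.

Lemma phi_holds_mono (S S' : restriction G) i (f : form n) (si : strat G i) :
  subres S S' -> positive f -> phi_holds f si S -> phi_holds f si S'.
Proof.
move=> sub_SS' pos_f phi_S s s_i.
exact: sat_positive_mono sub_SS' pos_f (phi_S s s_i).
Qed.

End Monotonicity.

Theorem mainTheorem7 (n : nat) (G : game n) (phi : 'I_n -> form n) :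
  (forall i, inhabited (strat G i)) ->
  (forall i, optimality_condition i (phi i)) ->
  (forall i, positive (phi i)) ->
  forall S S' : restriction G,
    subres S S' -> subres (opt_op phi S) (opt_op phi S').
Proof.
move=> _ _ pos_phi S S' sub_SS' i si [S_si phi_si]; split.
- exact: sub_SS'.
- exact: phi_holds_mono sub_SS' (pos_phi i) phi_si.
Qed.
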